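(* Let $n \geq 8$ and $P \in \mathrm{PLS}(2,3;n)$. If $P$ is not completely reduced, then the $(1,2)$-row-permutation of $P$ has a cycle of length at least $3$ whose cycle type is equivalent to a sequence containing two adjacent zeros (i.e. the cycle contains two cyclically consecutive elements neither of which lies in $\{P(1,1),P(1,2),P(1,3)\}$).
   Context: $\mathrm{PLS}(2,3;n)$ denotes the set of $n\times n$ partial Latin squares on symbols $\{1,\dots,n\}$ (each cell empty or containing one symbol, no symbol repeated in a row or column) in which rows $1,2$ and columns $1,2,3$ are completely filled and all other cells are empty. The $(1,2)$-row-permutation of $P$ is the permutation $\sigma$ of $\{1,\dots,n\}$ with $\sigma(P(1,i))=P(2,i)$ for all $i$. For a cycle $(a_1\,\dots\,a_m)$ in the disjoint cycle representation of $\sigma$, its cycle type is the $0/1$ sequence of length $m$ whose $i$th entry is $1$ if $a_i \in \{P(1,1),P(1,2),P(1,3)\}$ and $0$ otherwise. Two sequences are equivalent if one is a cyclic permutation of the other; two entries of a sequence are adjacent if one immediately follows the other. $P$ is completely reduced if the cycle type of every cycle of $\sigma$ is equivalent to one of: $00$, $01$, $11$, $101$, $111$, $1010$, $1110$, $10101$, $101010$. *)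

From mathcomp Require Import all_boot.
Set Implicit Arguments. Unset Strict Implicit. Unset Printing Implicit Defensive.

(* An n x n partial array: rows, columns and symbols are indexed by 'I_n
   (row/column/symbol k+1 of the paper is index k here); None = empty cell. *)
Definition parray (n : nat) := {ffun 'I_n * 'I_n -> option 'I_n}.

Definition is_PLS n (P : parray n) : Prop :=
  (forall r c1 c2 s, P (r, c1) = Some s -> P (r, c2) = Some s -> c1 = c2) /\
  (forall c r1 r2 s, P (r1, c) = Some s -> P (r2, c) = Some s -> r1 = r2).

Definition in_PLS23 n (P : parray n) : Prop :=
  is_PLS P /\
  forall r c : 'I_n,
    (P (r, c) != None) = ((nat_of_ord r < 2) || (nat_of_ord c < 3)).

Definition row_idx n (k : nat) : 'I_n.+2 := inord k.

(* The (1,2)-row-permutation sigma: sigma(P(1,i)) = P(2,i). *)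
Definition rowperm n (P : parray n.+2) (s : 'I_n.+2) : 'I_n.+2 :=
  match [pick i : 'I_n.+2 | P (row_idx n 0, i) == Some s] with
  | Some i => odflt s (P (row_idx n 1, i))
  | None => s
  end.

Definition first3 n (P : parray n.+2) (x : 'I_n.+2) : bool :=
  [exists j : 'I_n.+2, (nat_of_ord j < 3) && (P (row_idx n 0, j) == Some x)].

Definition cycle_type n (P : parray n.+2) (a : 'I_n.+2) : seq bool :=
  map (first3 P) (orbit (rowperm P) a).

Definition seq_equiv (s t : seq bool) : Prop := exists k, s = rot k t.

Definition reduced_types : seq (seq bool) :=
  [:: [:: false; false]; [:: false; true]; [:: true; true];
      [:: true; false; true]; [:: true; true; true];
      [:: true; false; true; false]; [:: true; true; true; false];
      [:: true; false; true; false; true];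
      [:: true; false; true; false; true; false]].

Definition completely_reduced n (P : parray n.+2) : Prop :=
  forall a : 'I_n.+2, exists2 t, t \in reduced_types & seq_equiv (cycle_type P a) t.

(* Rows 1 and 2 of P never agree in a column, so sigma is fixed-point free and
   every cycle has length at least 2; and the cycle type of a cycle has at most
   three ones, because {P(1,1), P(1,2), P(1,3)} has at most three elements.
   In a cyclic 0/1 sequence with a one but no two cyclically adjacent zeros,
   each zero is followed by a one, so there are at most as many zeros as ones:
   such a cycle type has length at most 6.  The finitely many cyclic 0/1
   sequences of length 2 to 6 with at most three ones, and without adjacent
   zeros when the length is at least 3, are checked to be equivalent to the
   listed reduced types. *)

From mathcomp Require Import all_boot.
From mathcomp Require Import zify.

Set Implicit Arguments.
Unset Strict Implicit.
Unset Printing Implicit Defensive.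

Definition adjacent_falses (s : seq bool) : bool :=
  has (fun k => infix [:: false; false] (rot k s)) (iota 0 (size s)).

Lemma adjacent_falsesP s :
  reflect (exists k, infix [:: false; false] (rot k s)) (adjacent_falses s).
Proof.
apply: (iffP hasP) => [[k _ h]|[k h]]; first by exists k.
have [lt_k_s | le_s_k] := ltnP k (size s).
  by exists k; rewrite ?mem_iota.
move: h; rewrite rot_oversize //.
by case: s {le_s_k} => [|x s] h //; exists 0; rewrite ?rot0.
Qed.

Lemma seq_equiv_rot k (s : seq bool) : seq_equiv s (rot k s).
Proof. by exists (size s - k); rewrite -{1}(rotK k s) /rotr size_rot. Qed.

Lemma count_negb_rcons_true (t : seq bool) :
  ~~ infix [:: false; false] (rcons t true) ->
  count negb t <= count id t + ~~ head true t.
Proof.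
elim: t => [|[] t IHt] //=; first by move/IHt; case: (head true t) => /=; lia.
by case: t IHt => [|[] t] /= IHt //; [move/IHt; lia | rewrite prefix0s].
Qed.

(* Rotating just past a one puts the sequence in the form [rcons t true]. *)
Lemma count_negb_le_count_id s :
  2 <= size s -> ~~ adjacent_falses s -> count negb s <= count id s.
Proof.
move=> s_ge2 /adjacent_falsesP no00.
have [|no_true] := boolP (has id s); last first.
  case: no00; exists 0; rewrite rot0.
  by case: s s_ge2 no_true => [|[] [|[] s]] //= _ _; rewrite prefix0s.
case/(has_nthP false) => i lt_i_s s_i.
have rot_s : rot i.+1 s = rcons (drop i.+1 s ++ take i s) true.
  by rewrite /rot (take_nth false lt_i_s) s_i rcons_cat.
set t := drop i.+1 s ++ take i s in rot_s; clearbody t.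
have no00_t : ~~ infix [:: false; false] (rcons t true).
  by apply/negP => h; apply: no00; exists i.+1; rewrite rot_s.
have count_rot a : count a (rot i.+1 s) = count a s.
  by apply/permP; rewrite perm_rot.
rewrite -(count_rot negb) -(count_rot id) rot_s -!cats1 !count_cat /=.
by have := count_negb_rcons_true no00_t; case: (head true t) => /=; lia.
Qed.

Fixpoint bool_seqs (L : nat) : seq (seq bool) :=
  if L is L'.+1 then [seq b :: t | b <- [:: true; false], t <- bool_seqs L']
  else [:: [::]].

Lemma mem_bool_seqs (s : seq bool) : s \in bool_seqs (size s).
Proof.
elim: s => [|b s IHs] //=; rewrite !mem_cat.
have cons_inj : injective (cons b) by move=> t1 t2 [].
by case: b cons_inj => /mem_map ->; rewrite IHs ?orbT.
Qed.

Definition reduced_type (s : seq bool) : bool :=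
  has (fun t => has (fun k => s == rot k t) (iota 0 (size t))) reduced_types.

Lemma reduced_typeP s :
  reduced_type s -> exists2 t, t \in reduced_types & seq_equiv s t.
Proof. by case/hasP => t t_red /hasP [k _ /eqP ->]; exists t => //; exists k. Qed.

Lemma short_seqs_reduced :
  all (fun L => all (fun s => [&& count id s <= 3 & (L < 3) || ~~ adjacent_falses s]
                              ==> reduced_type s) (bool_seqs L)) (iota 2 5).
Proof. by vm_compute. Qed.

Lemma equiv_reduced_type s :
  2 <= size s -> count id s <= 3 -> (3 <= size s -> ~~ adjacent_falses s) ->
  exists2 t, t \in reduced_types & seq_equiv s t.
Proof.
move=> s_ge2 count_s no00; apply: reduced_typeP.
have s_le6 : size s <= 6.
  have [/no00 no00s|] := leqP 3 (size s); last by lia.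
  have := count_negb_le_count_id s_ge2 no00s.
  by have: count id s + count negb s = size s := count_predC id s; lia.
have size_s : size s \in iota 2 5 by rewrite mem_iota; lia.
apply: (implyP (allP (allP short_seqs_reduced _ size_s) s (mem_bool_seqs s))).
by rewrite count_s /=; case: ltnP => // /no00.
Qed.

Section RowPermutation.

Variables (n : nat) (P : parray n.+2).

Let row0 := row_idx n 0.
Let row1 := row_idx n 1.

Lemma val_row_idx k : k <= n.+1 -> row_idx n k = k :> nat.
Proof. exact: inordK. Qed.

Lemma first3_sub d x :
  first3 P x -> x \in [seq odflt d (P (row0, inord j)) | j <- iota 0 3].
Proof.
case/existsP => j /andP [j_lt3 /eqP P_j]; apply/mapP; exists (val j).
  by rewrite mem_iota.
by rewrite inord_val -/row0 P_j.
Qed.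

Lemma count_cycle_type a : count id (cycle_type P a) <= 3.
Proof.
rewrite count_map -size_filter.
pose row0_entries := [seq odflt a (P (row0, inord j)) | j <- iota 0 3].
apply: (@leq_trans (size row0_entries)); last by rewrite size_map size_iota.
apply: uniq_leq_size; first by rewrite filter_uniq ?orbit_uniq.
by move=> x; rewrite mem_filter => /andP [/(first3_sub a)].
Qed.

Hypothesis P_PLS23 : in_PLS23 P.

Lemma row_filled (r c : 'I_n.+2) : r < 2 -> exists x, P (r, c) = Some x.
Proof.
move=> r_lt2; case: P_PLS23 => _ /(_ r c); rewrite r_lt2.
by case: (P (r, c)) => [x _|//]; exists x.
Qed.

Lemma rowperm_neq x : rowperm P x != x.
Proof.
case: P_PLS23 => [[row_inj col_inj] _].
have row0_lt2 : row0 < 2 by rewrite val_row_idx.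
have row1_lt2 : row1 < 2 by rewrite val_row_idx.
pose g c := odflt x (P (row0, c)).
have gE c : P (row0, c) = Some (g c).
  by rewrite /g; case: (row_filled c row0_lt2) => y ->.
have g_inj : injective g.
  by move=> c1 c2 g_eq; apply: (row_inj row0 c1 c2 (g c1)); rewrite gE ?g_eq.
rewrite /rowperm; case: pickP => [c /eqP P0c | no_c]; last first.
  by move: (no_c (invF g_inj x)); rewrite -/row0 gE f_invF eqxx.
have [y P1c] := row_filled c row1_lt2.
rewrite -/row1 P1c /=; apply/eqP => y_x; subst y.
have := col_inj c row0 row1 x P0c P1c => /(congr1 (@nat_of_ord _)).
by rewrite !val_row_idx.
Qed.

Lemma size_cycle_type a : 2 <= size (cycle_type P a).
Proof.
rewrite size_map; apply: (@uniq_leq_size _ [:: a; rowperm P a]).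
  by rewrite /= andbT inE eq_sym rowperm_neq.
move=> x; rewrite !inE => /orP [] /eqP ->; first exact: in_orbit.
by rewrite -fconnect_orbit fconnect1.
Qed.

End RowPermutation.

Theorem lemma4 (n : nat) (P : parray n.+2) :
  8 <= n.+2 -> in_PLS23 P -> ~ completely_reduced P ->
  exists a : 'I_n.+2,
    3 <= size (cycle_type P a) /\
    exists2 s : seq bool, seq_equiv (cycle_type P a) s & infix [:: false; false] s.
Proof.
move=> _ P_PLS23 not_reduced.
have [|no_adjacent] := boolP
  [exists a, (3 <= size (cycle_type P a)) && adjacent_falses (cycle_type P a)].
  case/existsP => a /andP [size_a /adjacent_falsesP [k adjacent]].
  by exists a; split => //; exists (rot k (cycle_type P a)); first exact: seq_equiv_rot.
case: not_reduced => a; apply: equiv_reduced_type.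
- exact: size_cycle_type.
- exact: count_cycle_type.
move=> size_a; apply/negP => adjacent; case/negP: no_adjacent.
by apply/existsP; exists a; rewrite size_a adjacent.
Qed.
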